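(* Let $r\ge2$, $e\ge1$ and $p'$ be integers with $0\le p'\le\frac{(r+1)e}{2}$. Then there exists an integer $p$ with $0\le p\le\frac{re}{2}$ such that the polynomial $$\Bigl\{\Omega^{2p'}\,(\underline{x}\,\underline{y})^{2p}\,a_{\underline{x}}^{re-2p}\,a_{\underline{y}}^{re-2p}\,b_{\underline{x}}^{e}\,b_{\underline{y}}^{e}\Bigr\}\Big|_{\underline{y}:=\underline{x}}$$ in the variables $a_0,a_1,b_0,b_1,x_0,x_1$ is not identically zero.
   Context: $\underline{x}=(x_0,x_1)$, $\underline{y}=(y_0,y_1)$, $a=(a_0,a_1)$, $b=(b_0,b_1)$ are pairs of indeterminates; $a_{\underline{x}}=a_0x_0+a_1x_1$, $a_{\underline{y}}=a_0y_0+a_1y_1$, similarly for $b$; $(\underline{x}\,\underline{y})=x_0y_1-x_1y_0$; $\Omega=\frac{\partial^2}{\partial x_0\partial y_1}-\frac{\partial^2}{\partial x_1\partial y_0}$; and $|_{\underline{y}:=\underline{x}}$ means substituting $y_i=x_i$ after differentiation. *)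

From HB Require Import structures.
From mathcomp Require Import all_boot all_order all_algebra.
From mathcomp Require Import mpoly.
Set Implicit Arguments. Unset Strict Implicit. Unset Printing Implicit Defensive.
Import GRing.Theory.
Local Open Scope ring_scope.

(* Polynomial ring Q[x0,x1,y0,y1,a0,a1,b0,b1] encoded as {mpoly rat[8]} with
   variable indices: x0=0, x1=1, y0=2, y1=3, a0=4, a1=5, b0=6, b1=7. *)
Definition P8 := {mpoly rat[8]}.

Definition ix0 : 'I_8 := inord 0.
Definition ix1 : 'I_8 := inord 1.
Definition iy0 : 'I_8 := inord 2.
Definition iy1 : 'I_8 := inord 3.
Definition ia0 : 'I_8 := inord 4.
Definition ia1 : 'I_8 := inord 5.
Definition ib0 : 'I_8 := inord 6.
Definition ib1 : 'I_8 := inord 7.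

Definition vX (i : 'I_8) : P8 := 'X_i.

Definition a_x : P8 := vX ia0 * vX ix0 + vX ia1 * vX ix1.
Definition a_y : P8 := vX ia0 * vX iy0 + vX ia1 * vX iy1.
Definition b_x : P8 := vX ib0 * vX ix0 + vX ib1 * vX ix1.
Definition b_y : P8 := vX ib0 * vX iy0 + vX ib1 * vX iy1.
Definition bracket_xy : P8 := vX ix0 * vX iy1 - vX ix1 * vX iy0.

Definition Omega (f : P8) : P8 :=
  mderiv ix0 (mderiv iy1 f) - mderiv ix1 (mderiv iy0 f).

Definition diag_img (i : 'I_8) : P8 :=
  if i == iy0 then vX ix0 else if i == iy1 then vX ix1 else vX i.

Definition diag (f : P8) : P8 := comp_mpoly [tuple diag_img i | i < 8] f.

From HB Require Import structures.
From mathcomp Require Import all_boot all_order all_algebra.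
From mathcomp Require Import mpoly ring zify.
Set Implicit Arguments. Unset Strict Implicit. Unset Printing Implicit Defensive.
Import GRing.Theory Num.Theory.
Local Open Scope ring_scope.

(* Let H be bihomogeneous of bidegree (d, d) in x = (x0, x1) and y = (y0, y1).
   Omega lowers both degrees by one, and
     Omega ((x y)^n H) = n (n + 1 + 2d) (x y)^(n-1) H + (x y)^n Omega H.
   As (x y) vanishes on the diagonal y = x, iterating gives
     diag (Omega^k ((x y)^n H)) = c * diag (Omega^(k-n) H)  with c > 0
   whenever n <= k <= d + n.  Apply this to H = a_x^m a_y^m b_x^e b_y^e,
   m = r e - 2p.
   If 2p' <= r e take p = p': the result is a positive multiple of
   diag H = a_x^(2m) b_x^(2e).  Otherwise take p = p' - e: then
   Omega^(2e) H = +-(2e)! (m^_e)^2 (a b)^(2e) a_x^(m-e) a_y^(m-e), whose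
   restriction to the diagonal is again nonzero. *)

Lemma mderivXU (R : comNzRingType) (n : nat) (i j : 'I_n) :
  mderiv j ('X_i : {mpoly R[n]}) = (i == j)%:R.
Proof.
rewrite mderivX mnm1E; case: eqP => [->|_]; last by rewrite scale0r.
have -> : (U_(j) - U_(j) = 0)%MM by apply/mnmP => k; rewrite mnmBE mnm0E subnn.
by rewrite mpolyX0 scale1r.
Qed.

Lemma mderiv1 (R : comNzRingType) (n : nat) (i : 'I_n) :
  mderiv i (1 : {mpoly R[n]}) = 0.
Proof. by rewrite -mpolyC1 mderivC. Qed.

Lemma mderiv_natr (R : comNzRingType) (n : nat) (i : 'I_n) (k : nat) :
  mderiv i (k%:R : {mpoly R[n]}) = 0.
Proof. by rewrite raddfMn /= mderiv1 mul0rn. Qed.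

Lemma mderiv_exp (R : comNzRingType) (n : nat) (i : 'I_n) (p : {mpoly R[n]}) k :
  mderiv i (p ^+ k) = mderiv i p * p ^+ k.-1 *+ k.
Proof.
elim: k => [|k IHk]; first by rewrite mulr0n expr0 mderiv1.
by rewrite exprS mderivM IHk; case: k {IHk} => [|k]; rewrite /= ?expr0 ?exprS; ring.
Qed.

Lemma mderiv_intr (R : comNzRingType) (n : nat) (i : 'I_n) (z : int) :
  mderiv i (z%:~R : {mpoly R[n]}) = 0.
Proof. by rewrite raddfMz /= mderiv1 mul0rz. Qed.

Lemma ord8_eqE (i j : nat) : (i < 8)%N -> (j < 8)%N ->
  (inord i == inord j :> 'I_8) = (i == j).
Proof. by move=> lti ltj; rewrite -val_eqE /= !inordK. Qed.

Lemma mderiv_vX (i j : 'I_8) : mderiv j (vX i) = (i == j)%:R.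
Proof. exact: mderivXU. Qed.

Ltac mderiv_simpl :=
  rewrite ?(mderivD, mderivB, mderivN, mderivM, mderiv_exp, mderivMn, mderiv_vX,
            mderiv0, mderiv1, mderiv_natr)
    /ix0 /ix1 /iy0 /iy1 /ia0 /ia1 /ib0 /ib1 ?ord8_eqE //=.

Definition euler (i0 i1 : 'I_8) (f : P8) : P8 :=
  vX i0 * mderiv i0 f + vX i1 * mderiv i1 f.

Definition bihomog (dx dy : int) (f : P8) : Prop :=
  euler ix0 ix1 f = dx%:~R * f /\ euler iy0 iy1 f = dy%:~R * f.

Lemma eulerB i0 i1 f g : euler i0 i1 (f - g) = euler i0 i1 f - euler i0 i1 g.
Proof. rewrite /euler !mderivB; ring. Qed.

Lemma eulerM i0 i1 f g : euler i0 i1 (f * g) = euler i0 i1 f * g + f * euler i0 i1 g.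
Proof. rewrite /euler !mderivM; ring. Qed.

Lemma euler_mderiv i0 i1 j f : euler i0 i1 (mderiv j f) =
  mderiv j (euler i0 i1 f) - (i0 == j)%:R * mderiv i0 f - (i1 == j)%:R * mderiv i1 f.
Proof. rewrite /euler !mderivD !mderivM !mderiv_vX !(mderiv_comm j); ring. Qed.

Lemma bihomogB dx dy f g : bihomog dx dy f -> bihomog dx dy g -> bihomog dx dy (f - g).
Proof. by move=> [fx fy] [gx gy]; split; rewrite eulerB ?fx ?fy ?gx ?gy mulrBr. Qed.

Lemma bihomogM dx dy ex ey f g : bihomog dx dy f -> bihomog ex ey g ->
  bihomog (dx + ex) (dy + ey) (f * g).
Proof. by move=> [fx fy] [gx gy]; split; rewrite eulerM ?fx ?fy ?gx ?gy intrD; ring. Qed.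

Lemma bihomogX dx dy f k : bihomog dx dy f -> bihomog (dx *+ k) (dy *+ k) (f ^+ k).
Proof.
move=> hf; elim: k => [|k IHk].
  by split; rewrite /euler expr0 !mderiv1 mulr1; ring.
by rewrite exprS !mulrS; apply: bihomogM.
Qed.

Lemma bihomog_mderivx i dx dy f : i \in [:: ix0; ix1] ->
  bihomog dx dy f -> bihomog (dx - 1) dy (mderiv i f).
Proof.
move=> ix [fx fy]; split; rewrite euler_mderiv ?fx ?fy mderivM mderiv_intr;
  by move: ix; rewrite !inE => /orP[]/eqP->; mderiv_simpl; ring.
Qed.

Lemma bihomog_mderivy i dx dy f : i \in [:: iy0; iy1] ->
  bihomog dx dy f -> bihomog dx (dy - 1) (mderiv i f).
Proof.
move=> iy [fx fy]; split; rewrite euler_mderiv ?fx ?fy mderivM mderiv_intr;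
  by move: iy; rewrite !inE => /orP[]/eqP->; mderiv_simpl; ring.
Qed.

Lemma bihomog_Omega dx dy f : bihomog dx dy f -> bihomog (dx - 1) (dy - 1) (Omega f).
Proof.
by move=> hf; apply: bihomogB; apply: bihomog_mderivx; rewrite ?inE ?eqxx ?orbT //;
  apply: bihomog_mderivy; rewrite ?inE ?eqxx ?orbT.
Qed.

Lemma bihomog_bracket : bihomog 1 1 bracket_xy.
Proof. by rewrite /bihomog /euler /bracket_xy; mderiv_simpl; split; ring. Qed.

Definition xy_vars : seq 'I_8 := [:: ix0; ix1; iy0; iy1].

Definition xy_const (c : P8) : Prop := forall i, i \in xy_vars -> mderiv i c = 0.

Lemma xy_const_intr (z : int) : xy_const z%:~R.
Proof. by move=> i _; rewrite mderiv_intr. Qed.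

Lemma xy_const_nat (n : nat) : xy_const n%:R.
Proof. by move=> i _; rewrite mderiv_natr. Qed.

Lemma xy_const_vX j : j \notin xy_vars -> xy_const (vX j).
Proof. by move=> jx i ix; rewrite mderiv_vX; case: eqP ix jx => // ->->. Qed.

Lemma xy_constB c d : xy_const c -> xy_const d -> xy_const (c - d).
Proof. by move=> hc hd i ix; rewrite mderivB hc ?hd ?subr0. Qed.

Lemma xy_constM c d : xy_const c -> xy_const d -> xy_const (c * d).
Proof. by move=> hc hd i ix; rewrite mderivM hc ?hd ?mul0r ?mulr0 ?addr0. Qed.

Lemma mderiv_constM i c f : i \in xy_vars -> xy_const c ->
  mderiv i (c * f) = c * mderiv i f.
Proof. by move=> ix hc; rewrite mderivM hc ?mul0r ?add0r. Qed.

Lemma OmegaD f g : Omega (f + g) = Omega f + Omega g.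
Proof. rewrite /Omega !mderivD; ring. Qed.

Lemma OmegaB f g : Omega (f - g) = Omega f - Omega g.
Proof. rewrite /Omega !mderivB; ring. Qed.

Lemma Omega_constM c f : xy_const c -> Omega (c * f) = c * Omega f.
Proof.
by move=> hc; rewrite /Omega !mderiv_constM ?mulrBr // ?inE ?eqxx ?orbT.
Qed.

Lemma iter_OmegaD k f g : iter k Omega (f + g) = iter k Omega f + iter k Omega g.
Proof. by elim: k => //= k ->; rewrite OmegaD. Qed.

Lemma iter_OmegaB k f g : iter k Omega (f - g) = iter k Omega f - iter k Omega g.
Proof. by elim: k => //= k ->; rewrite OmegaB. Qed.

Lemma iter_Omega_constM k c f : xy_const c -> iter k Omega (c * f) = c * iter k Omega f.
Proof. by move=> hc; elim: k => //= k ->; rewrite Omega_constM. Qed.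

Lemma Omega_bracketM f : Omega (bracket_xy * f) =
  2 * f + euler ix0 ix1 f + euler iy0 iy1 f + bracket_xy * Omega f.
Proof. rewrite /Omega /bracket_xy /euler; mderiv_simpl; ring. Qed.

Lemma Omega_bracketXM dx dy f n : bihomog dx dy f ->
  Omega (bracket_xy ^+ n * f) = (n%:Z * (n%:Z + 1 + dx + dy))%:~R
    * (bracket_xy ^+ n.-1 * f) + bracket_xy ^+ n * Omega f.
Proof.
move=> hf; elim: n => [|n IHn]; first by rewrite !expr0 !mul1r mul0r; ring.
have [ex ey] := bihomogM (bihomogX n bihomog_bracket) hf.
rewrite exprS -mulrA Omega_bracketM IHn ex ey.
by case: n {IHn ex ey} => [|n]; rewrite /= ?expr0 ?exprS; ring.
Qed.

HB.instance Definition _ :=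
  GRing.RMorphism.copy diag (comp_mpoly [tuple diag_img i | i < 8]).

Lemma diag_vX i : diag (vX i) = diag_img i.
Proof. by rewrite /diag /vX comp_mpolyXU -tnth_nth tnth_mktuple. Qed.

Ltac diag_simpl :=
  rewrite ?(rmorphD, rmorphN, rmorphM) /= ?diag_vX /diag_img
    /ix0 /ix1 /iy0 /iy1 /ia0 /ia1 /ib0 /ib1 ?ord8_eqE //=.

Lemma diag_bracket : diag bracket_xy = 0.
Proof. by rewrite /bracket_xy; diag_simpl; ring. Qed.

Lemma diag_iter_Omega_bracketX_eq0 dx dy f k n : bihomog dx dy f -> (k < n)%N ->
  diag (iter k Omega (bracket_xy ^+ n * f)) = 0.
Proof.
elim: k n dx dy f => [|k IHk] [|n] dx dy f hf // ltkn.
  by rewrite /= rmorphM rmorphXn /= diag_bracket expr0n mul0r.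
rewrite iterSr (Omega_bracketXM _ hf) iter_OmegaD.
rewrite (@iter_Omega_constM _ _ _ (xy_const_intr _)).
rewrite rmorphD rmorphM /= (IHk n dx dy) ?(IHk n.+1 _ _ _ (bihomog_Omega hf)) //.
  by rewrite mulr0 addr0.
exact: ltnW.
Qed.

(* The bound k <= d + n keeps the bidegree of the iterates of Omega
   nonnegative, hence the coefficients n (n + 1 + 2d) positive. *)
Lemma diag_iter_Omega_bracketX (d : nat) f k n :
  bihomog d d f -> (n <= k)%N -> (k <= d + n)%N ->
  exists2 c : nat, (0 < c)%N &
    diag (iter k Omega (bracket_xy ^+ n * f)) = c%:R * diag (iter (k - n) Omega f).
Proof.
elim: k n d f => [|k IHk] [|n] d f hf // lenk lekd; try by exists 1%N; rewrite // expr0 !mul1r.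
rewrite iterSr (Omega_bracketXM _ hf) iter_OmegaD.
rewrite (@iter_Omega_constM _ _ _ (xy_const_intr _)).
rewrite rmorphD rmorphM rmorph_int /= subSS.
have [c1 c1_gt0 ->] := IHk n d f hf lenk ltac:(lia).
have [c2 ->] : exists c2 : nat,
    diag (iter k Omega (bracket_xy ^+ n.+1 * Omega f)) = c2%:R * diag (iter (k - n) Omega f).
  case: (ltnP k n.+1) => [ltkn|ltnk].
    by exists 0%N; rewrite (diag_iter_Omega_bracketX_eq0 (bihomog_Omega hf)) ?mul0r.
  have hd : bihomog d.-1 d.-1 (Omega f) by rewrite predn_int; [exact: bihomog_Omega | lia].
  have [c2 _ ->] := IHk n.+1 d.-1 (Omega f) hd ltnk ltac:(lia).
  by exists c2; rewrite -iterSr subnSK.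
exists (n.+1 * (n.+2 + d + d) * c1 + c2)%N; first by rewrite addn_gt0 !muln_gt0 c1_gt0.
rewrite natrD !natrM; ring.
Qed.

Definition bracket_ab : P8 := vX ia0 * vX ib1 - vX ia1 * vX ib0.

Definition lin_prod (s t u v : nat) : P8 := a_x ^+ s * a_y ^+ t * b_x ^+ u * b_y ^+ v.

Lemma xy_const_bracket_ab : xy_const bracket_ab.
Proof.
by apply: xy_constB; apply: xy_constM; apply: xy_const_vX;
  rewrite !inE /ia0 /ia1 /ib0 /ib1 /ix0 /ix1 /iy0 /iy1 !ord8_eqE.
Qed.

Lemma mderiv_a_x : (mderiv ix0 a_x = vX ia0) * (mderiv ix1 a_x = vX ia1)
  * (mderiv iy0 a_x = 0) * (mderiv iy1 a_x = 0).
Proof. by rewrite /a_x; mderiv_simpl; do !split; ring. Qed.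

Lemma mderiv_a_y : (mderiv ix0 a_y = 0) * (mderiv ix1 a_y = 0)
  * (mderiv iy0 a_y = vX ia0) * (mderiv iy1 a_y = vX ia1).
Proof. by rewrite /a_y; mderiv_simpl; do !split; ring. Qed.

Lemma mderiv_b_x : (mderiv ix0 b_x = vX ib0) * (mderiv ix1 b_x = vX ib1)
  * (mderiv iy0 b_x = 0) * (mderiv iy1 b_x = 0).
Proof. by rewrite /b_x; mderiv_simpl; do !split; ring. Qed.

Lemma mderiv_b_y : (mderiv ix0 b_y = 0) * (mderiv ix1 b_y = 0)
  * (mderiv iy0 b_y = vX ib0) * (mderiv iy1 b_y = vX ib1).
Proof. by rewrite /b_y; mderiv_simpl; do !split; ring. Qed.

Lemma bihomog_lin_prod s t u v : bihomog (s + u)%N (t + v)%N (lin_prod s t u v).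
Proof.
have hx : bihomog 1 0 a_x /\ bihomog 1 0 b_x.
  by rewrite /bihomog /euler !(mderiv_a_x, mderiv_b_x) /a_x /b_x; split; split; ring.
have hy : bihomog 0 1 a_y /\ bihomog 0 1 b_y.
  by rewrite /bihomog /euler !(mderiv_a_y, mderiv_b_y) /a_y /b_y; split; split; ring.
have := bihomogM (bihomogM (bihomogM (bihomogX s hx.1) (bihomogX t hy.1))
  (bihomogX u hx.2)) (bihomogX v hy.2).
by rewrite !mul0rn !addr0 !add0r !natz -!PoszD.
Qed.

Lemma Omega_lin_prod s t u v : Omega (lin_prod s t u v) = bracket_ab *
  ((s * v)%:R * lin_prod s.-1 t u v.-1 - (u * t)%:R * lin_prod s t.-1 u.-1 v).
Proof.
rewrite /Omega /lin_prod !(mderivM, mderiv_exp, mderivMn, mderiv_a_x, mderiv_a_y,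
  mderiv_b_x, mderiv_b_y, mderiv0, mderiv_natr).
by rewrite /bracket_ab; mderiv_simpl; rewrite !natrM; ring.
Qed.

(* Each application of Omega lowers either (s, v) or (t, u) by one, with
   coefficient s v or -u t; the 'C(u + v, u) orders of these steps contribute
   s^_v v`! t^_u u`! each, and 'C(u + v, u) u`! v`! = (u + v)`!. *)
Lemma iter_Omega_lin_prod s t u v : iter (u + v) Omega (lin_prod s t u v) =
  (-1) ^+ u * ((u + v)`! * s ^_ v * t ^_ u)%:R * bracket_ab ^+ (u + v)
  * lin_prod (s - v) (t - u) 0 0.
Proof.
move Nuv : (u + v)%N => N; elim: N => [|N IHN] in s t u v Nuv *.
  have [-> ->] : u = 0%N /\ v = 0%N by lia.
  by rewrite !subn0 fact0 !ffactn0 !expr0 !mul1r.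
rewrite iterSr Omega_lin_prod (iter_Omega_constM _ _ xy_const_bracket_ab) iter_OmegaB.
rewrite !(@iter_Omega_constM _ _ _ (xy_const_nat _)).
have -> : (s * v)%:R * iter N Omega (lin_prod s.-1 t u v.-1) =
    (-1) ^+ u * (N`! * v * s ^_ v * t ^_ u)%:R * bracket_ab ^+ N
    * lin_prod (s - v) (t - u) 0 0.
  case: v Nuv => [|v] Nuv; first by rewrite !muln0 !mul0n !mul0r mulr0 !mul0r.
  rewrite IHN; last by lia.
  have -> : (s.-1 - v = s - v.+1)%N by lia.
  by rewrite [s ^_ _]ffactnS !natrM; ring.
have -> : (u * t)%:R * iter N Omega (lin_prod s t.-1 u.-1 v) =
    - ((-1) ^+ u * (N`! * u * s ^_ v * t ^_ u)%:R * bracket_ab ^+ N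
       * lin_prod (s - v) (t - u) 0 0).
  case: u Nuv => [|u] Nuv; first by rewrite !mul0n !muln0 !mul0r mulr0 !mul0r oppr0.
  rewrite IHN; last by lia.
  have -> : (t.-1 - u = t - u.+1)%N by lia.
  by rewrite [t ^_ _]ffactnS !natrM exprS; ring.
by rewrite exprS factS -Nuv !natrM natrD; ring.
Qed.

Lemma mpoly_natr_eq0 (R : numDomainType) (n k : nat) :
  (k%:R == 0 :> {mpoly R[n]}) = (k == 0)%N.
Proof. by rewrite -mpolyC_nat mpolyC_eq0 pnatr_eq0. Qed.

Lemma mpoly_neq0_meval (R : comNzRingType) (n : nat) (x : 'I_n -> R)
  (p : {mpoly R[n]}) : p.@[x] != 0 -> p != 0.
Proof. by apply: contra => /eqP ->; rewrite meval0. Qed.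

Definition index_point (i : 'I_8) : rat := (i : nat)%:R.

Lemma a_x_neq0 : a_x != 0.
Proof.
apply: (@mpoly_neq0_meval _ _ index_point).
by rewrite /a_x mevalD !mevalM !mevalXU /index_point !inordK.
Qed.

Lemma b_x_neq0 : b_x != 0.
Proof.
apply: (@mpoly_neq0_meval _ _ index_point).
by rewrite /b_x mevalD !mevalM !mevalXU /index_point !inordK.
Qed.

Lemma bracket_ab_neq0 : bracket_ab != 0.
Proof.
apply: (@mpoly_neq0_meval _ _ index_point).
by rewrite /bracket_ab mevalB !mevalM !mevalXU /index_point !inordK.
Qed.

Lemma diag_lin_prod s t u v : diag (lin_prod s t u v) = a_x ^+ (s + t) * b_x ^+ (u + v).
Proof.
have ha : (diag a_x = a_x) * (diag a_y = a_x) by rewrite /a_x /a_y; diag_simpl.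
have hb : (diag b_x = b_x) * (diag b_y = b_x) by rewrite /b_x /b_y; diag_simpl.
by rewrite /lin_prod !rmorphM !rmorphXn /= !ha !hb !exprD; ring.
Qed.

Lemma diag_lin_prod_neq0 s t u v : diag (lin_prod s t u v) != 0.
Proof. by rewrite diag_lin_prod mulf_neq0 // expf_neq0 // ?a_x_neq0 ?b_x_neq0. Qed.

Lemma diag_iter_Omega_lin_prod_neq0 s t u v : (v <= s)%N -> (u <= t)%N ->
  diag (iter (u + v) Omega (lin_prod s t u v)) != 0.
Proof.
move=> levs leut; rewrite iter_Omega_lin_prod.
set c := (_`! * _ * _)%N.
have c_gt0 : (0 < c)%N by rewrite !muln_gt0 fact_gt0 !ffact_gt0 levs leut.
clearbody c; have diag_ab : diag bracket_ab = bracket_ab by rewrite /bracket_ab; diag_simpl.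
rewrite rmorphM; apply: mulf_neq0; last exact: diag_lin_prod_neq0.
rewrite !rmorphM !rmorphXn rmorphN1 rmorph_nat /= diag_ab.
by rewrite !mulf_neq0 ?signr_eq0 ?expf_neq0 ?bracket_ab_neq0 ?mpoly_natr_eq0 -?lt0n.
Qed.

Lemma diag_iter_Omega_bracketX_neq0 (d : nat) f k n : bihomog d d f ->
  (n <= k)%N -> (k <= d + n)%N -> diag (iter (k - n) Omega f) != 0 ->
  diag (iter k Omega (bracket_xy ^+ n * f)) != 0.
Proof.
move=> hf lenk lekd nz; have [c c_gt0 ->] := diag_iter_Omega_bracketX hf lenk lekd.
by rewrite mulf_neq0 // mpoly_natr_eq0 -lt0n.
Qed.

Theorem mainTheorem9 (r e p' : nat) :
  (2 <= r)%N -> (1 <= e)%N -> (2 * p' <= (r + 1) * e)%N ->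
  exists p : nat, (2 * p <= r * e)%N /\
    diag (iter (2 * p') Omega
      (bracket_xy ^+ (2 * p) * a_x ^+ (r * e - 2 * p) * a_y ^+ (r * e - 2 * p)
       * b_x ^+ e * b_y ^+ e)) != 0.
Proof.
move=> r_ge2 e_ge1; rewrite mulnDl mul1n => le_p'.
have le_2e : (2 * e <= r * e)%N := leq_mul r_ge2 (leqnn e).
have mul_lin_prod n M : bracket_xy ^+ n * a_x ^+ M * a_y ^+ M * b_x ^+ e * b_y ^+ e =
    bracket_xy ^+ n * lin_prod M M e e by rewrite /lin_prod !mulrA.
have [small|large] := leqP (2 * p') (r * e).
  exists p'; split=> //; rewrite mul_lin_prod.
  apply: (diag_iter_Omega_bracketX_neq0 (bihomog_lin_prod _ _ _ _)) => //.
    by rewrite leq_addl.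
  by rewrite subnn diag_lin_prod_neq0.
exists (p' - e)%N; split; first by lia.
rewrite mul_lin_prod; apply: (diag_iter_Omega_bracketX_neq0 (bihomog_lin_prod _ _ _ _)).
- by rewrite leq_mul2l leq_subr.
- lia.
- rewrite (_ : 2 * p' - 2 * (p' - e) = e + e)%N; last by lia.
  by apply: diag_iter_Omega_lin_prod_neq0; lia.
Qed.
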